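(* Let $G=(V,E)$ be a graph of order $n\ge 9$ such that $\tau(G)=\tau=n-4$ and its $\tau$-set $W$ satisfies $G[W]\cong K_\tau$. If $|N(W)\setminus W|=2$, then $\beta_p(G)=n-3$.
   Context: All graphs are finite, simple, undirected and connected. $N(W)=\bigcup_{v\in W}N(v)$. Two vertices $u,v$ are twins if $N(u)\setminus\{v\}=N(v)\setminus\{u\}$; the twin number $\tau(G)$ is the maximum cardinality of an equivalence class of the twin relation; a $\tau$-set is a set of pairwise twin vertices of cardinality $\tau(G)$. For a partition $\Pi=\{S_1,\dots,S_k\}$ of $V$, $r(u|\Pi)=(d(u,S_1),\dots,d(u,S_k))$ with $d(u,S)=\min_{w\in S}d(u,w)$; $\Pi$ is locating if $r(u|\Pi)\ne r(v|\Pi)$ for all distinct $u,v$; $\beta_p(G)$ is the minimum size of a locating partition. *)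

From mathcomp Require Import all_boot.
Set Implicit Arguments. Unset Strict Implicit. Unset Printing Implicit Defensive.

Section Graph.
Variables (T : finType) (e : rel T).

Definition simple_graph : Prop := symmetric e /\ irreflexive e.
Definition connected_graph : Prop := forall u v : T, connect e u v.

Definition nbhd (v : T) : {set T} := [set x | e v x].
Definition nbhd_set (W : {set T}) : {set T} := \bigcup_(v in W) nbhd v.

Fixpoint ball (k : nat) (u : T) : {set T} :=
  match k with
  | 0 => [set u]
  | k'.+1 => ball k' u :|: nbhd_set (ball k' u)
  end.

(* graph distance; in a connected graph every distance is < #|T|,
   so the default value #|T| is never reached *)
Definition dist (u v : T) : nat :=
  \big[minn/#|T|]_(k < #|T| | v \in ball k u) k.

(* d(u,S) = min_{w in S} d(u,w) (S nonempty in our uses) *)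
Definition dist_set (u : T) (S : {set T}) : nat :=
  \big[minn/#|T|]_(w in S) dist u w.

Definition twins (u v : T) : bool := nbhd u :\ v == nbhd v :\ u.

Definition twin_class (v : T) : {set T} := [set u | twins u v].
Definition twin_number : nat := \max_(v : T) #|twin_class v|.

Definition tau_set (W : {set T}) : Prop :=
  (forall u v, u \in W -> v \in W -> twins u v) /\ #|W| = twin_number.

Definition is_clique (W : {set T}) : Prop :=
  forall u v, u \in W -> v \in W -> u != v -> e u v.

Definition locating_partition (P : {set {set T}}) : bool :=
  partition P [set: T] &&
  [forall u, forall v, (u != v) ==>
     [exists S in P, dist_set u S != dist_set v S]].

(* partition dimension beta_p(G): minimum size of a locating partition
   (the partition into singletons is locating, so the min is attained) *)
Definition partition_dimension : nat :=
  \big[minn/#|T|]_(P : {set {set T}} | locating_partition P) #|P|.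

End Graph.

From mathcomp Require Import all_boot zify.
Set Implicit Arguments. Unset Strict Implicit. Unset Printing Implicit Defensive.

(* The vertices of W are pairwise adjacent twins, so a locating partition
   separates them into #|W| classes; an outside neighbour a of W is adjacent
   to all of W, so if it shared the class of some w in W, every other class
   would contain a vertex of W at distance 1 from both a and w.  Hence
   beta_p >= #|W| + 1 = n - 3.
   Conversely, outside W there are only the two neighbours a, b of W and two
   further vertices c, d.  Keep all of W but two vertices p, q as singletons
   and split {p, q, a, b, c, d} into three classes.  Since a and b are not
   twins of p (W is a largest twin class), one of three fixed colourings is
   locating, whatever the 64 possible graphs on {a, b, c, d}.  Distances are
   only compared up to 2. *)

Lemma bigminn_leq_cond (I : finType) (P : pred I) (F : I -> nat) d j :
  P j -> \big[minn/d]_(i | P i) F i <= F j.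
Proof.
move=> Pj; rewrite -big_filter.
have : j \in [seq i <- index_enum I | P i] by rewrite mem_filter Pj mem_index_enum.
elim: [seq _ <- _ | _] => [|x s IHs] //=.
rewrite big_cons in_cons => /orP [/eqP <-|/IHs]; first exact: geq_minl.
exact: leq_trans (geq_minr _ _).
Qed.

Lemma leq_bigminn (I : finType) (P : pred I) (F : I -> nat) d m :
  m <= d -> (forall i, P i -> m <= F i) -> m <= \big[minn/d]_(i | P i) F i.
Proof.
move=> md mF; apply: (big_ind (leq m)) => // x y.
by rewrite leq_min => -> ->.
Qed.

Section Distances.
Variables (T : finType) (e : rel T).
Hypotheses (e_sym : symmetric e) (T_gt1 : 1 < #|T|).

Lemma in_ball1 u x : (x \in ball e 1 u) = (x == u) || e u x.
Proof. by rewrite /= /nbhd_set big_set1 !inE. Qed.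

Lemma dist_leq_ball u v k : v \in ball e k u -> k < #|T| -> dist e u v <= k.
Proof. by move=> vk kT; exact: (@bigminn_leq_cond _ _ _ _ (Ordinal kT)). Qed.

Lemma leq_dist u v m :
  m <= #|T| -> (forall k, k < m -> v \notin ball e k u) -> m <= dist e u v.
Proof.
move=> mT vk; apply: leq_bigminn => // k kv; rewrite leqNgt.
by apply: contraL kv; apply: vk.
Qed.

Lemma distxx u : dist e u u = 0.
Proof.
apply/eqP; rewrite -leqn0; apply: dist_leq_ball; first by rewrite inE.
exact: ltnW.
Qed.

Lemma dist_gt0 u v : u != v -> 0 < dist e u v.
Proof. by move=> uv; apply: leq_dist => [|[]//]; [exact: ltnW | rewrite inE eq_sym]. Qed.

Lemma dist_adj u v : e u v -> dist e u v <= 1.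
Proof. by move=> uv; apply: dist_leq_ball; rewrite // in_ball1 uv orbT. Qed.

Lemma dist_nadj u v : u != v -> ~~ e u v -> 1 < dist e u v.
Proof.
move=> uv nuv; apply: leq_dist => // -[|[|]] // _; first by rewrite inE eq_sym.
by rewrite in_ball1 eq_sym negb_or uv.
Qed.

Lemma dist_set_mem u (S : {set T}) : u \in S -> dist_set e u S = 0.
Proof.
by move=> uS; apply/eqP; rewrite -leqn0 -(distxx u) bigminn_leq_cond.
Qed.

Lemma dist_set_gt0 u (S : {set T}) : u \notin S -> 0 < dist_set e u S.
Proof.
move=> uS; apply: leq_bigminn => [|w wS]; first exact: ltnW.
by apply: dist_gt0; apply: contraNneq uS => ->.
Qed.

Lemma dist_set_adj u (S : {set T}) y : u \notin S -> y \in S -> e u y -> dist_set e u S = 1.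
Proof.
move=> uS yS uy; apply/eqP; rewrite eqn_leq dist_set_gt0 // andbT.
exact: leq_trans (bigminn_leq_cond _ _ yS) (dist_adj uy).
Qed.

Lemma dist_set_nadj u (S : {set T}) :
  u \notin S -> {in S, forall y, ~~ e u y} -> 1 < dist_set e u S.
Proof.
move=> uS nuS; apply: leq_bigminn => // w wS; rewrite dist_nadj ?nuS //.
by apply: contraNneq uS => ->.
Qed.

(* Truncated at 2, the distance to S is determined by adjacency alone. *)
Definition dist2 u (S : {set T}) : nat :=
  if u \in S then 0 else if [exists y in S, e u y] then 1 else 2.

Lemma minn_dist_set2 u (S : {set T}) : minn (dist_set e u S) 2 = dist2 u S.
Proof.
rewrite /dist2; case: ifPn => uS; first by rewrite dist_set_mem.
case: existsP => [[y /andP [yS uy]]|nuS]; first by rewrite (dist_set_adj uS yS uy).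
apply/minn_idPr/dist_set_nadj => // y yS; apply/negP => uy.
by apply: nuS; exists y; rewrite yS.
Qed.

Lemma dist_set_neq2 u v (S : {set T}) :
  dist2 u S != dist2 v S -> dist_set e u S != dist_set e v S.
Proof. by apply: contra => /eqP uv; rewrite -!minn_dist_set2 uv. Qed.

Lemma twins_ball u v k : twins e u v -> e u v -> ball e k.+1 u = ball e k.+1 v.
Proof.
move=> /eqP uv_tw uv; elim: k => [|k IHk]; last by rewrite /= -!/(ball e k.+1 _) IHk.
apply/setP => x; rewrite !in_ball1.
have [->|xu] := eqVneq x u; first by rewrite e_sym uv orbT.
have [->|xv] := eqVneq x v; first by rewrite uv orbT.
by move/setP: uv_tw => /(_ x); rewrite !inE xu xv.
Qed.

Lemma twins_dist u v x :
  twins e u v -> e u v -> x != u -> x != v -> dist e u x = dist e v x.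
Proof.
move=> tw uv xu xv; apply: eq_bigl => -[[|k] kT] /=.
  by rewrite !inE (negbTE xu) (negbTE xv).
by rewrite -!/(ball e k.+1 _) (twins_ball k tw uv).
Qed.

End Distances.

Section LocatingPartition.
Variables (T : finType) (e : rel T) (P : {set {set T}}).
Hypotheses (e_sym : symmetric e) (e_irr : irreflexive e) (T_gt1 : 1 < #|T|).
Hypothesis P_loc : locating_partition e P.

Let P_part : partition P [set: T]. Proof. by case/andP: P_loc. Qed.
Let P_triv : trivIset P. Proof. by case/and3P: P_part. Qed.
Let P_cover x : x \in cover P. Proof. by case/and3P: P_part => /eqP ->. Qed.

Lemma locating_separates u v :
  u != v -> exists2 S, S \in P & dist_set e u S != dist_set e v S.
Proof.
move=> uv; case/andP: P_loc => _ /forallP/(_ u)/forallP/(_ v).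
by rewrite uv => /existsP [S /andP [SP uvS]]; exists S.
Qed.

Lemma same_pblock_mem u v S :
  pblock P u = pblock P v -> S \in P -> (u \in S) = (v \in S).
Proof.
move=> uv SP; apply/idP/idP => xS.
  by rewrite -(def_pblock P_triv SP xS) uv mem_pblock.
by rewrite -(def_pblock P_triv SP xS) -uv mem_pblock.
Qed.

Lemma twins_pblock u v : twins e u v -> e u v -> pblock P u != pblock P v.
Proof.
move=> tw uv; apply/eqP => Puv.
have [|S SP] := locating_separates (u := u) (v := v).
  by apply: contraTneq uv => ->; rewrite e_irr.
apply/negP; rewrite negbK; have uSvS := same_pblock_mem Puv SP.
have [uS|uS] := boolP (u \in S); first by rewrite !dist_set_mem // -uSvS.
have vS : v \notin S by rewrite -uSvS.
apply/eqP/eq_bigr => x xS; apply: twins_dist => //.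
  by apply: contraNneq uS => <-.
by apply: contraNneq vS => <-.
Qed.

Lemma card_locating_gt (W : {set T}) a :
    {in W &, forall u v, twins e u v} -> is_clique e W ->
    a \notin W -> {in W, forall w, e w a} ->
  #|W| < #|P|.
Proof.
move=> twW clqW aW adjWa; rewrite ltnNge; apply/negP => cardP.
have inj : {in W &, injective (pblock P)}.
  move=> u v uW vW Puv; apply/eqP/negPn/negP => uv.
  by move: (twins_pblock (twW u v uW vW) (clqW _ _ uW vW uv)); rewrite Puv eqxx.
have PW : pblock P @: W = P.
  apply/eqP; rewrite eqEcard card_in_imset // cardP andbT.
  by apply/subsetP => _ /imsetP [w _ ->]; rewrite pblock_mem.
have /imsetP [w wW Paw] : pblock P a \in pblock P @: W by rewrite PW pblock_mem.
have [|S SP] := locating_separates (u := a) (v := w).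
  by apply: contraNneq aW => ->.
apply/negP; rewrite negbK; have aSwS := same_pblock_mem Paw SP.
have [aS|aS] := boolP (a \in S); first by rewrite !dist_set_mem // -aSwS.
have wS : w \notin S by rewrite -aSwS.
move: SP; rewrite -PW => /imsetP [w' w'W defS].
have w'S : w' \in S by rewrite defS mem_pblock.
have ww' : w != w' by apply: contraNneq wS => ->.
have aw' : e a w' by rewrite e_sym adjWa.
have ww'_adj : e w w' := clqW _ _ wW w'W ww'.
by rewrite (dist_set_adj T_gt1 aS w'S aw') (dist_set_adj T_gt1 wS w'S ww'_adj).
Qed.

End LocatingPartition.

Section TwinClass.
Variables (T : finType) (e : rel T) (W : {set T}).

Lemma tau_set_outside_twin z w :
  tau_set e W -> w \in W -> z \notin W -> ~~ twins e z w.
Proof.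
move=> [twW cardW] wW zW; apply/negP => zw.
have sub : z |: W \subset twin_class e w.
  by apply/subsetP => u; rewrite !inE => /predU1P [->|/twW ->].
have := leq_trans (subset_leq_card sub) (@leq_bigmax _ (fun v => #|twin_class e v|) w).
by rewrite cardsU1 zW -/(twin_number e) -cardW ltnn.
Qed.

Lemma twins_adj_outside w x :
    {in W &, forall u v, twins e u v} -> w \in W -> x \notin W ->
  e w x = (x \in nbhd_set e W :\: W).
Proof.
move=> twW wW xW; rewrite inE xW; apply/idP/bigcupP => [wx|[w' w'W]].
  by exists w; rewrite ?inE.
rewrite inE => w'x.
have xw : x != w by apply: contraNneq xW => ->.
have xw' : x != w' by apply: contraNneq xW => ->.
by move: (twW _ _ w'W wW) => /eqP/setP/(_ x); rewrite !inE xw xw' w'x /= => <-.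
Qed.

End TwinClass.

Lemma card4_enum (T : finType) (A : {set T}) a b :
  #|A| = 4 -> a \in A -> b \in A -> a != b ->
  exists c d, uniq [:: a; b; c; d] /\ A =i [:: a; b; c; d].
Proof.
move=> cardA aA bA ab.
have : #|A :\ a :\ b| = 2.
  move: (cardsD1 a A) (cardsD1 b (A :\ a)).
  by rewrite !inE aA bA eq_sym ab cardA /=; lia.
move/eqP/cards2P => [c [d [cd Acd]]].
have : c \in A :\ a :\ b by rewrite Acd !inE eqxx.
have : d \in A :\ a :\ b by rewrite Acd !inE eqxx orbT.
rewrite !inE => /and3P [db da dA] /and3P [cb ca cA].
exists c, d; split.
  by rewrite /= !inE !negb_or ab cd !(eq_sym a) !(eq_sym b) ca cb da db.
move=> x; rewrite !inE; apply/idP/idP => [xA|].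
  have [->|xa] := eqVneq x a; first by [].
  have [->|xb] := eqVneq x b; first by rewrite orbT.
  move/setP: Acd => /(_ x); rewrite !inE xa xb xA /=.
  by case/esym/orP => ->; rewrite /= ?orbT.
by case/or4P => /eqP ->.
Qed.

(* Vertices 0 and 1 of the gadget stand for two vertices of the clique W,
   2 and 3 for the two outside neighbours of W and 4 and 5 for the two
   remaining vertices; the six booleans are the adjacencies among 2, ..., 5. *)
Definition gadget (ab ac ad bc bd cd : bool) (i j : nat) : bool :=
  match i, j with
  | 0, 1 | 1, 0 | 0, 2 | 2, 0 | 0, 3 | 3, 0 | 1, 2 | 2, 1 | 1, 3 | 3, 1 => true
  | 2, 3 | 3, 2 => ab
  | 2, 4 | 4, 2 => ac
  | 2, 5 | 5, 2 => ad
  | 3, 4 | 4, 3 => bc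
  | 3, 5 | 5, 3 => bd
  | 4, 5 | 5, 4 => cd
  | _, _ => false
  end.

Definition gadget_dist2 (E : nat -> nat -> bool) (col : seq nat) (i m : nat) : nat :=
  if nth 0 col i == nth 0 col m then 0
  else if has (fun k => (nth 0 col k == nth 0 col m) && E i k) (iota 0 6) then 1
  else 2.

(* Pairs i, j with (i < 4) != (j < 4) are separated by the singleton class
   of a third vertex of W, which is adjacent to exactly the vertices 0, ..., 3. *)
Definition gadget_locating (E : nat -> nat -> bool) (col : seq nat) : bool :=
  all (fun i => all (fun j => [|| i == j, (i < 4) != (j < 4) |
        has (fun m => gadget_dist2 E col i m != gadget_dist2 E col j m) (iota 0 6)])
    (iota 0 6)) (iota 0 6).

Lemma gadget_locating_colouring ab ac ad bc bd cd :
  ~~ [&& ab, ~~ ac & ~~ ad] -> ~~ [&& ab, ~~ bc & ~~ bd] ->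
  has (gadget_locating (gadget ab ac ad bc bd cd))
    [:: [:: 0; 1; 0; 1; 2; 2]; [:: 0; 1; 0; 2; 0; 1]; [:: 0; 1; 0; 1; 0; 2]].
Proof. by case: ab; case: ac; case: ad; case: bc; case: bd; case: cd. Qed.

Section Gadget.
Variables (T : finType) (e : rel T) (W : {set T}) (a b c d : T).
Hypotheses (e_sym : symmetric e) (e_irr : irreflexive e) (clqW : is_clique e W).
Hypothesis abcd_uniq : uniq [:: a; b; c; d].
Hypothesis outside_W : forall x, (x \notin W) = (x \in [:: a; b; c; d]).
Hypothesis adj_outside :
  forall w x, w \in W -> x \notin W -> e w x = (x \in [:: a; b]).
Hypothesis no_outside_twin : forall z w, z \notin W -> w \in W -> ~~ twins e z w.

Let T_gt1 : 1 < #|T|.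
Proof.
apply/card_gt1P; exists a, b; split=> //.
by move: abcd_uniq; rewrite /= inE negb_or => /andP [/andP []].
Qed.

Lemma twins_outside z w :
    w \in W -> z \notin W -> z \in [:: a; b] ->
    (forall x, x \notin W -> x != z -> e z x = (x \in [:: a; b])) ->
  twins e z w.
Proof.
move=> wW zW zab adj_z; apply/eqP/setP => x; rewrite !inE.
have [xW|xW] := boolP (x \in W).
  have xz : x != z by apply: contraNneq zW => <-.
  have [->|xw] := eqVneq x w; first by rewrite e_irr andbF.
  have ewx : e w x by apply: clqW; rewrite // eq_sym.
  by rewrite xz ewx e_sym adj_outside.
have xw : x != w by apply: contraNneq xW => ->.
have [->|xz] := eqVneq x z; first by rewrite e_irr andbF.
by rewrite xw adj_z // adj_outside.
Qed.

Lemma outside_nbr_not_twin z z' y y' w :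
    w \in W -> [:: z; z'] =i [:: a; b] -> perm_eq [:: z; z'; y; y'] [:: a; b; c; d] ->
  ~~ [&& e z z', ~~ e z y & ~~ e z y'].
Proof.
move=> wW zz'_ab perm_zyy'; apply/negP => /and3P [zz'_adj zy_nadj zy'_nadj].
have zyy'_abcd := perm_mem perm_zyy'.
have zyy'_uniq : uniq [:: z; z'; y; y'] by rewrite (perm_uniq perm_zyy').
have zW : z \notin W by rewrite outside_W -zyy'_abcd mem_head.
apply: (negP (no_outside_twin zW wW)); apply: twins_outside => //.
  by rewrite -zz'_ab mem_head.
move: zyy'_uniq; rewrite /= !inE !negb_or.
case/and4P => /and3P [zz' zy zy'] /andP [zz'y zz'y'] _ _.
move=> x; rewrite outside_W -zyy'_abcd -zz'_ab !inE => /or4P [] /eqP -> xz.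
- by rewrite eqxx in xz.
- by rewrite zz'_adj eqxx orbT.
- by rewrite (negbTE zy_nadj) !(eq_sym y) (negbTE zy) (negbTE zz'y).
by rewrite (negbTE zy'_nadj) !(eq_sym y') (negbTE zy') (negbTE zz'y').
Qed.

Section Colouring.
Variables (p q g : T) (col : seq nat).
Hypotheses (pW : p \in W) (qW : q \in W) (pq : p != q) (gW' : g \in W :\ p :\ q).
Hypothesis col_lt3 : all (fun k => k < 3) col.
Hypothesis col_loc :
  gadget_locating (gadget (e a b) (e a c) (e a d) (e b c) (e b d) (e c d)) col.

Let s := [:: p; q; a; b; c; d].
Let v i := nth p s i.
Let W' := W :\ p :\ q.

Lemma gadget_uniq : uniq s.
Proof.
by rewrite /s [uniq _]/= in_cons negb_or pq -!outside_W pW qW; apply: abcd_uniq.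
Qed.

Lemma gadget_vertex_eq i j : i < 6 -> j < 6 -> (v i == v j) = (i == j).
Proof. by move=> i6 j6; rewrite nth_uniq ?gadget_uniq. Qed.

Lemma gadget_vertex_W i : i < 6 -> (v i \in W) = (i < 2).
Proof.
case: i => [|[|i]] // i6; rewrite -[_ \in W]negbK outside_W.
by apply/negbF; rewrite /v /= mem_nth.
Qed.

Lemma gadget_vertex_notin_W' i : i < 6 -> v i \notin W'.
Proof.
case: i => [|[|i]] i6; rewrite !inE ?gadget_vertex_W ?andbF //.
  by rewrite /v /= eqxx andbF.
by rewrite /v /= eqxx.
Qed.

Lemma notin_W'_gadget x : x \notin W' -> x \in s.
Proof.
rewrite /s !inE !negb_and !negbK => /or3P [/eqP ->|/eqP ->|]; rewrite ?eqxx ?orbT //.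
by rewrite outside_W !inE => ->; rewrite !orbT.
Qed.

Definition gadget_colour x : T + 'I_3 :=
  if x \in W' then inl x else inr (inord (nth 0 col (index x s))).

Let colour_class x := [set y in [set: T] | gadget_colour x == gadget_colour y].

Lemma colour_class_W' x y : x \in W' -> (y \in colour_class x) = (y == x).
Proof.
move=> xW'; rewrite !inE /gadget_colour xW'; case: ifP => yW'; first by rewrite eq_sym.
by apply/esym/negbTE; apply: contraFneq yW' => ->.
Qed.

Lemma gadget_colour_vertex i :
  i < 6 -> gadget_colour (v i) = inr (inord (nth 0 col i)).
Proof.
move=> i6; rewrite /gadget_colour (negbTE (gadget_vertex_notin_W' i6)).
by rewrite index_uniq ?gadget_uniq.
Qed.

Lemma colour_class_vertex i m :
  i < 6 -> m < 6 -> (v i \in colour_class (v m)) = (nth 0 col i == nth 0 col m).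
Proof.
have col3 k : nth 0 col k < 3.
  have [kcol|colk] := ltnP k (size col); last by rewrite nth_default.
  by apply: (allP col_lt3); rewrite mem_nth.
move=> i6 m6; rewrite !inE !gadget_colour_vertex //= [RHS]eq_sym.
by apply/eqP/eqP => [[/(congr1 val)]|->] //=; rewrite !inordK.
Qed.

Lemma colour_class_notin_W' m y : m < 6 -> y \in colour_class (v m) -> y \notin W'.
Proof.
move=> m6; apply: contraTN => yW'.
by rewrite !inE gadget_colour_vertex // /gadget_colour yW'.
Qed.

Lemma adj_W_gadget w j : w \in W -> 2 <= j < 6 -> e w (v j) = (j < 4).
Proof.
move=> wW /andP [j2 j6]; rewrite adj_outside ?gadget_vertex_W -?ltnNge //.
rewrite -[[:: a; b]]/[:: v 2; v 3] !inE !gadget_vertex_eq //.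
by case: j j2 j6 => [|[|[|[|[|[|j]]]]]].
Qed.

Let E := gadget (e a b) (e a c) (e a d) (e b c) (e b d) (e c d).

Lemma gadget_adj i j : i < 6 -> j < 6 -> e (v i) (v j) = E i j.
Proof.
case: i => [|[|[|[|[|[|i]]]]]] // _; case: j => [|[|[|[|[|[|j]]]]]] // _; rewrite /E /=;
first [ by rewrite e_irr
      | by apply: clqW; rewrite ?gadget_vertex_W ?gadget_vertex_eq
      | by rewrite adj_W_gadget ?gadget_vertex_W
      | by rewrite e_sym adj_W_gadget ?gadget_vertex_W
      | by rewrite e_sym
      | done ].
Qed.

Lemma dist2_gadget_g i :
  i < 6 -> dist2 e (v i) (colour_class g) = if i < 4 then 1 else 2.
Proof.
move=> i6; have vg : v i != g.
  by apply: contraNneq (gadget_vertex_notin_W' i6) => ->.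
have gW : g \in W by case/setD1P: gW' => _ /setD1P [].
rewrite /dist2 colour_class_W' // (negbTE vg).
have -> : [exists y in colour_class g, e (v i) y] = e (v i) g.
  apply/existsP/idP => [[y /andP []]|vig].
    by rewrite colour_class_W' // => /eqP ->.
  by exists g; rewrite colour_class_W' ?eqxx.
move: i6 vg; case: i => [|[|[|[|[|[|i]]]]]] // _ vg;
first [ by rewrite clqW ?gadget_vertex_W | by rewrite e_sym adj_W_gadget ].
Qed.

Lemma dist2_gadget i m :
  i < 6 -> m < 6 -> dist2 e (v i) (colour_class (v m)) = gadget_dist2 E col i m.
Proof.
move=> i6 m6; rewrite /dist2 /gadget_dist2 colour_class_vertex //; case: ifP => // _.
congr (if _ then 1 else 2); apply/existsP/hasP => [[y /andP [ym viy]]|[k]].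
  have ys : y \in s := notin_W'_gadget (colour_class_notin_W' m6 ym).
  have k6 : index y s < 6 by rewrite -[6]/(size s) index_mem.
  have vk : v (index y s) = y by rewrite /v nth_index.
  exists (index y s); first by rewrite mem_iota.
  by rewrite -colour_class_vertex // -gadget_adj // vk ym viy.
rewrite mem_iota add0n => /andP [_ k6] /andP [km Eik].
by exists (v k); rewrite colour_class_vertex // km gadget_adj.
Qed.

Let P := preim_partition gadget_colour [set: T].

Lemma colour_class_in_P x : colour_class x \in P.
Proof. by apply/imsetP; exists x. Qed.

Lemma gadget_partition_locating : locating_partition e P.
Proof.
rewrite /locating_partition preim_partitionP /=.
apply/forallP => x; apply/forallP => y; apply/implyP => xy.
suff [z xyz] : exists z, dist2 e x (colour_class z) != dist2 e y (colour_class z).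
  by apply/existsP; exists (colour_class z); rewrite colour_class_in_P dist_set_neq2.
have [xW'|xW'] := boolP (x \in W').
  exists x; rewrite /dist2 !colour_class_W' // eqxx [y == x]eq_sym (negbTE xy).
  by case: existsP.
have [yW'|yW'] := boolP (y \in W').
  by exists y; rewrite /dist2 !colour_class_W' // eqxx (negbTE xy); case: existsP.
have xs := notin_W'_gadget xW'; have ys := notin_W'_gadget yW'.
have i6 : index x s < 6 by rewrite -[6]/(size s) index_mem.
have j6 : index y s < 6 by rewrite -[6]/(size s) index_mem.
move: xy; rewrite -(nth_index p xs) -(nth_index p ys) -/(v _) -/(v _).
rewrite gadget_vertex_eq //; move: (index x s) (index y s) i6 j6 => i j i6 j6 ij.
move/allP/(_ i): col_loc; rewrite mem_iota => /(_ i6)/allP/(_ j).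
rewrite mem_iota (negbTE ij) orFb => /(_ j6) /orP [gij|/hasP [m]].
  by exists g; rewrite !dist2_gadget_g //; move: gij; do 2!case: ifP.
by rewrite mem_iota => /andP [_ m6] dij; exists (v m); rewrite !dist2_gadget.
Qed.

Lemma card_gadget_partition : #|P| <= #|W| + 1.
Proof.
have -> : P = (fun r => [set y in [set: T] | r == gadget_colour y])
                 @: (gadget_colour @: [set: T]).
  by rewrite -imset_comp; apply: eq_imset.
apply: leq_trans (leq_imset_card _ _) _.
have sub : gadget_colour @: [set: T] \subset inl @: W' :|: inr @: [set: 'I_3].
  apply/subsetP => _ /imsetP [x _ ->]; rewrite /gadget_colour; case: ifP => xW'.
    by rewrite inE imset_f.
  by rewrite inE imset_f ?orbT ?inE.
apply: leq_trans (subset_leq_card sub) _; apply: leq_trans (leq_card_setU _ _) _.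
rewrite !card_imset; try by move=> x y [].
rewrite cardsT card_ord (cardsD1 p W) pW (cardsD1 q (W :\ p)) !inE qW eq_sym pq /=.
by rewrite /W' addn3 !add1n addn1.
Qed.

End Colouring.

Lemma gadget_partition :
  2 < #|W| -> exists2 P, locating_partition e P & #|P| <= #|W| + 1.
Proof.
move=> W_gt2; have [p pW] : exists p, p \in W by apply/card_gt0P; lia.
have [q qW] : exists q, q \in W :\ p.
  by apply/card_gt0P; move: W_gt2; rewrite (cardsD1 p) pW /=; lia.
have [g gW'] : exists g, g \in W :\ p :\ q.
  by apply/card_gt0P; move: W_gt2; rewrite (cardsD1 p) pW (cardsD1 q) qW /=; lia.
case/setD1P: qW => qp qW; have pq : p != q by rewrite eq_sym.
have perm_bacd : perm_eq [:: b; a; c; d] [:: a; b; c; d].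
  by apply/permPl; apply: (perm_catCA [:: b] [:: a] [:: c; d]).
have nontwin_a := outside_nbr_not_twin pW (frefl _) (perm_refl _).
have ba_ab : [:: b; a] =i [:: a; b] by move=> x; rewrite !inE orbC.
have nontwin_b := outside_nbr_not_twin pW ba_ab perm_bacd.
rewrite [e b a]e_sym in nontwin_b.
have /hasP [col col_cands col_loc] :=
  gadget_locating_colouring (e c d) nontwin_a nontwin_b.
have col_lt3 : all (fun k => k < 3) col.
  by move: col_cands; rewrite !inE => /or3P [] /eqP ->.
exists (preim_partition (gadget_colour p q col) [set: T]).
  exact: gadget_partition_locating pW qW pq gW' col_lt3 col_loc.
exact: card_gadget_partition pW qW pq.
Qed.
End Gadget.

Theorem lemma26 (T : finType) (e : rel T) (W : {set T}) :
  simple_graph e -> connected_graph e ->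
  9 <= #|T| ->
  twin_number e = #|T| - 4 ->
  tau_set e W ->
  is_clique e W ->
  #|nbhd_set e W :\: W| = 2 ->
  partition_dimension e = #|T| - 3.
Proof.
move=> [e_sym e_irr] _ T_ge9 tauG tauW clqW /eqP/cards2P [a [b [ab NW]]].
have [twW cardW] := tauW; rewrite tauG in cardW.
have T_gt1 : 1 < #|T| by lia.
have NW_out x : x \in nbhd_set e W :\: W -> x \in ~: W by case/setDP => _; rewrite inE.
have aCW : a \in ~: W by apply: NW_out; rewrite NW !inE eqxx.
have bCW : b \in ~: W by apply: NW_out; rewrite NW !inE eqxx orbT.
have aW : a \notin W by rewrite -in_setC.
have adj_out w x : w \in W -> x \notin W -> e w x = (x \in [:: a; b]).
  by move=> wW xW; rewrite (twins_adj_outside twW wW xW) NW !inE.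
have cardCW : #|~: W| = 4 by rewrite cardsCs setCK cardW; lia.
have [c [d [abcd_uniq CW]]] := card4_enum cardCW aCW bCW ab.
have outside_W x : (x \notin W) = (x \in [:: a; b; c; d]) by rewrite -CW inE.
have no_twin z w : z \notin W -> w \in W -> ~~ twins e z w.
  by move=> zW wW; apply: tau_set_outside_twin tauW wW zW.
have [|P locP cardP] :=
  gadget_partition e_sym e_irr clqW abcd_uniq outside_W adj_out no_twin.
  by rewrite cardW; lia.
apply/eqP; rewrite eqn_leq; apply/andP; split.
  by apply: leq_trans (bigminn_leq_cond _ _ locP) _; rewrite cardW in cardP; lia.
apply: leq_bigminn => [|P' locP']; first exact: leq_subr.
have adj_a : {in W, forall w, e w a} by move=> w wW; rewrite adj_out // inE eqxx.
have := card_locating_gt e_sym e_irr T_gt1 locP' twW clqW aW adj_a.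
by rewrite cardW; lia.
Qed.
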